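(* Let $n\ge1$. Let $\mathbf{R}$ be a subalgebra of $\mathbf{P\L}_n\times\mathbf{P\L}_n$ with $\mathbf{R}\subseteq{\le}$. Assume $\mathbf{R}$ is not equal to the diagonal $\Delta_{\mathbf{S}}=\{(s,s):s\in S\}$ of any subalgebra $\mathbf{S}$ of $\mathbf{P\L}_n$. Put $S=\mathrm{pr}_1(\mathbf{R})\times\mathrm{pr}_2(\mathbf{R})$. Then $$\lhd\cap S\;\subseteq\;\mathbf{R}\;\subseteq\;{\le}\cap S.$$
   Context: For $n\ge 1$, the algebra $\mathbf{P\L}_n=\langle\{0,\tfrac1n,\dots,\tfrac{n-1}{n},1\},\wedge,\vee,\odot,\oplus,0,1\rangle$ has $\wedge=\min$, $\vee=\max$, $x\odot y=\max\{0,x+y-1\}$ and $x\oplus y=\min\{1,x+y\}$. The order is ${\le}=\{(x,y)\in\mathbf{P\L}_n^2: x\le y\}$. The relation $\lhd$ is $\lhd=\{(x,y)\in\mathbf{P\L}_n^2: x=0\text{ or }y=1\}$. Both $\le$ and $\lhd$ are subalgebras of $\mathbf{P\L}_n\times\mathbf{P\L}_n$. The maps $\mathrm{pr}_1,\mathrm{pr}_2$ are the projections. *)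

From mathcomp Require Import all_boot.
Set Implicit Arguments. Unset Strict Implicit. Unset Printing Implicit Defensive.

(* The algebra PL_n: the element k : 'I_n.+1 encodes the rational k/n.
   Under this encoding min/max are min/max, x (.) y = max(0, x+y-1)
   becomes (x + y) - n (truncated), x (+) y = min(1, x+y) becomes
   minn n (x + y), 0 is ord0 and 1 is ord_max (value n). *)
Definition PL (n : nat) := 'I_n.+1.

Section PLops.
Variable n : nat.
Definition pl_meet (x y : 'I_n.+1) : 'I_n.+1 := inord (minn x y).
Definition pl_join (x y : 'I_n.+1) : 'I_n.+1 := inord (maxn x y).
Definition pl_odot (x y : 'I_n.+1) : 'I_n.+1 := inord ((x + y) - n).
Definition pl_oplus (x y : 'I_n.+1) : 'I_n.+1 := inord (minn n (x + y)).
Definition pl_zero : 'I_n.+1 := ord0.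
Definition pl_one : 'I_n.+1 := ord_max.

Definition is_subalg (S : {set 'I_n.+1}) : Prop :=
  pl_zero \in S /\ pl_one \in S /\
  (forall x y, x \in S -> y \in S ->
     [/\ pl_meet x y \in S, pl_join x y \in S,
         pl_odot x y \in S & pl_oplus x y \in S]).

Definition is_subalg2 (R : {set 'I_n.+1 * 'I_n.+1}) : Prop :=
  (pl_zero, pl_zero) \in R /\ (pl_one, pl_one) \in R /\
  (forall p q, p \in R -> q \in R ->
     [/\ (pl_meet p.1 q.1, pl_meet p.2 q.2) \in R,
         (pl_join p.1 q.1, pl_join p.2 q.2) \in R,
         (pl_odot p.1 q.1, pl_odot p.2 q.2) \in R &
         (pl_oplus p.1 q.1, pl_oplus p.2 q.2) \in R]).

Definition pl_le : {set 'I_n.+1 * 'I_n.+1} :=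
  [set p | (nat_of_ord p.1 <= nat_of_ord p.2)%N].
Definition pl_lhd : {set 'I_n.+1 * 'I_n.+1} :=
  [set p | (p.1 == pl_zero) || (p.2 == pl_one)].

Definition diag (S : {set 'I_n.+1}) : {set 'I_n.+1 * 'I_n.+1} :=
  [set (s, s) | s in S].

Definition pr1 (R : {set 'I_n.+1 * 'I_n.+1}) : {set 'I_n.+1} := [set p.1 | p in R].
Definition pr2 (R : {set 'I_n.+1 * 'I_n.+1}) : {set 'I_n.+1} := [set p.2 | p in R].
End PLops.

From mathcomp Require Import all_boot.
From mathcomp Require Import zify.

Set Implicit Arguments. Unset Strict Implicit. Unset Printing Implicit Defensive.

(* The heart of the argument is that a subalgebra R of PL_n x PL_n that
   contains a strict pair (x, y), x < y, must contain (0, 1):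
   - a pair (x, 1) with x < 1 is pushed down to (0, 1) by iterating
     (x, 1) (.) (x, 1) = (2x - 1, 1), and dually (0, y) with y > 0 is pushed
     up to (0, 1) by iterating (+);
   - in general, (+) (when 2y <= 1) or (.) (when 2x >= 1) doubles the gap
     y - x, and when 2x < 1 < 2y the pair (x, y) (+) (x, y) = (2x, 1) is of
     the first kind; so induction on 1 - (y - x) reaches (0, 1).
   Once (0, 1) is in R, meeting it with (a, b) in R gives (0, b) and joining
   it with (a, b) gives (a, 1), which yields lhd /\ pr1 R x pr2 R <= R.
   If R has no strict pair then, being below <=, R is the diagonal of its
   first projection, which is a subalgebra of PL_n: the excluded case. *)

Section PLValues.
Variable n : nat.
Implicit Types x y : 'I_n.+1.

Lemma val_meet x y : nat_of_ord (pl_meet x y) = minn x y.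
Proof. by rewrite /pl_meet inordK // (leq_ltn_trans (geq_minl _ _)). Qed.

Lemma val_join x y : nat_of_ord (pl_join x y) = maxn x y.
Proof. by rewrite /pl_join inordK // gtn_max !ltn_ord. Qed.

Lemma val_odot x y : nat_of_ord (pl_odot x y) = (x + y - n)%N.
Proof. by rewrite /pl_odot inordK //; have := ltn_ord x; have := ltn_ord y; lia. Qed.

Lemma val_oplus x y : nat_of_ord (pl_oplus x y) = minn n (x + y).
Proof. by rewrite /pl_oplus inordK // (leq_ltn_trans (geq_minl _ _)). Qed.

Lemma ord_zero x : nat_of_ord x = 0 -> x = pl_zero n.
Proof. by move=> x0; apply: ord_inj. Qed.

Lemma ord_one x : nat_of_ord x = n -> x = pl_one n.
Proof. by move=> xn; apply: ord_inj. Qed.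
End PLValues.

Section StrictPairs.
Variable n : nat.
Variable R : {set 'I_n.+1 * 'I_n.+1}.
Hypothesis HR : is_subalg2 R.
Implicit Types x y : 'I_n.+1.

Notation zero := (pl_zero n).
Notation one := (pl_one n).

Lemma meetR x y x' y' : (x, y) \in R -> (x', y') \in R ->
  (pl_meet x x', pl_meet y y') \in R.
Proof. by case: HR => _ [_ hop] /hop h /h []. Qed.

Lemma joinR x y x' y' : (x, y) \in R -> (x', y') \in R ->
  (pl_join x x', pl_join y y') \in R.
Proof. by case: HR => _ [_ hop] /hop h /h []. Qed.

Lemma odotR x y x' y' : (x, y) \in R -> (x', y') \in R ->
  (pl_odot x x', pl_odot y y') \in R.
Proof. by case: HR => _ [_ hop] /hop h /h []. Qed.

Lemma oplusR x y x' y' : (x, y) \in R -> (x', y') \in R ->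
  (pl_oplus x x', pl_oplus y y') \in R.
Proof. by case: HR => _ [_ hop] /hop h /h []. Qed.

(* A pair (x, 1) with x < 1 yields (0, 1): squaring under (.) maps it to
   (2x - 1, 1), strictly decreasing the first coordinate. *)
Lemma top_pair_zero_one x : (x, one) \in R -> (x < n)%N -> (zero, one) \in R.
Proof.
have [k] := ubnP x; elim: k x => // k IH x xk xR xn.
have [x0 | x0] := eqVneq (nat_of_ord x) 0; first by rewrite -(ord_zero x0).
have eone : pl_odot one one = one by apply: ord_one; rewrite val_odot /=; lia.
have := odotR xR xR; rewrite eone => x2R.
apply: (IH _ _ x2R) => //; rewrite val_odot; lia.
Qed.

(* Dually, (0, y) with 0 < y yields (0, 1): doubling under (+). *)
Lemma bottom_pair_zero_one y : (zero, y) \in R -> (0 < y)%N -> (zero, one) \in R.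
Proof.
have [k] := ubnP (n - y); elim: k y => // k IH y yk yR y0.
have [yn | yn] := eqVneq (nat_of_ord y) n; first by rewrite -(ord_one yn).
have ezero : pl_oplus zero zero = zero by apply: ord_zero; rewrite val_oplus.
have := oplusR yR yR; rewrite ezero => y2R.
by apply: (IH _ _ y2R); rewrite val_oplus; have := ltn_ord y; lia.
Qed.

(* The key fact: any strict pair (x, y), x < y, in R yields (0, 1).
   Induction on 1 - (y - x), doubling the gap with (+) or (.). *)
Lemma strict_pair_zero_one x y : (x, y) \in R -> (x < y)%N -> (zero, one) \in R.
Proof.
have [k] := ubnP (n - (y - x)); elim: k x y => // k IH x y gap xyR xy.
have yn := ltn_ord y.
have [y1 | y1] := eqVneq (nat_of_ord y) n.
  by apply: (top_pair_zero_one (x := x)); [rewrite -(ord_one y1) | lia].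
have [x0 | x0] := eqVneq (nat_of_ord x) 0.
  by apply: (bottom_pair_zero_one (y := y)); [rewrite -(ord_zero x0) | lia].
have [small | big] := leqP (2 * y) n.
  apply: (IH _ _ _ (oplusR xyR xyR)); rewrite !val_oplus; lia.
have [large | mid] := leqP n (2 * x).
  apply: (IH _ _ _ (odotR xyR xyR)); rewrite !val_odot; lia.
have eone : pl_oplus y y = one by apply: ord_one; rewrite val_oplus; lia.
have := oplusR xyR xyR; rewrite eone => x2R.
by apply: top_pair_zero_one x2R _; rewrite val_oplus; lia.
Qed.

(* With (0, 1) in R, every (a, b) of lhd with a in pr1 R and b in pr2 R is
   in R: meet (0, 1) with a pair (_, b), or join it with a pair (a, _). *)
Lemma lhd_sub_of_zero_one : (zero, one) \in R ->
  (pl_lhd n :&: setX (pr1 R) (pr2 R)) \subset R.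
Proof.
move=> zoR; apply/subsetP => -[a b].
rewrite !inE /= => /and3P [lhd /imsetP [[a1 b1] p1R /= ea] /imsetP [[a2 b2] p2R /= eb]].
rewrite {}ea {}eb in lhd *.
case/orP: lhd => /eqP ->.
- have emeet0 : pl_meet zero a2 = zero by apply: ord_zero; rewrite val_meet /=; lia.
  have emeet1 : pl_meet one b2 = b2.
    by apply: ord_inj; rewrite val_meet /=; have := ltn_ord b2; lia.
  by have := meetR zoR p2R; rewrite emeet0 emeet1.
- have ejoin0 : pl_join zero a1 = a1 by apply: ord_inj; rewrite val_join /=; lia.
  have ejoin1 : pl_join one b1 = one.
    by apply: ord_one; rewrite val_join /=; have := ltn_ord b1; lia.
  by have := joinR zoR p1R; rewrite ejoin0 ejoin1.
Qed.

Lemma pr1_subalg : is_subalg (pr1 R).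
Proof.
case: HR => h0 [h1 _].
split; first exact: imset_f h0.
split; first exact: imset_f h1.
move=> _ _ /imsetP [[x y] xyR ->] /imsetP [[x' y'] xyR' ->].
by split; apply/imsetP; eexists;
  [exact: meetR xyR xyR' | | exact: joinR xyR xyR' |
   | exact: odotR xyR xyR' | | exact: oplusR xyR xyR' | ].
Qed.

Lemma diag_of_no_strict_pair : R \subset pl_le n ->
  (forall x y, (x, y) \in R -> ~~ (x < y)%N) -> R = diag (pr1 R).
Proof.
move=> Rle nostrict.
have Rdiag x y : (x, y) \in R -> y = x.
  move=> xyR; have := nostrict _ _ xyR; have := subsetP Rle _ xyR.
  by rewrite inE /= => le nlt; apply: ord_inj; lia.
apply/setP => -[x y]; apply/idP/imsetP.
  by move=> xyR; rewrite (Rdiag _ _ xyR); exists x => //; apply: imset_f xyR.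
case=> _ /imsetP [[x' y'] xyR' ->] [-> ->].
by rewrite /= -{2}(Rdiag _ _ xyR').
Qed.
End StrictPairs.

Theorem lemma3p9 (n : nat) (hn : (1 <= n)%N) (R : {set 'I_n.+1 * 'I_n.+1}) :
  is_subalg2 R ->
  R \subset pl_le n ->
  ~ (exists S : {set 'I_n.+1}, is_subalg S /\ R = diag S) ->
  (pl_lhd n :&: setX (pr1 R) (pr2 R)) \subset R /\
  R \subset (pl_le n :&: setX (pr1 R) (pr2 R)).
Proof.
move=> HR Rle notdiag; split.
  apply: lhd_sub_of_zero_one => //.
  have [/exists_inP [[x y] xyR /= xy] | /exists_inP nostrict] :=
    boolP [exists p in R, (nat_of_ord p.1 < nat_of_ord p.2)%N].
    exact: strict_pair_zero_one xyR xy.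
  exfalso; apply: notdiag; exists (pr1 R); split; first exact: pr1_subalg.
  apply: diag_of_no_strict_pair => // x y xyR.
  by apply/negP => xy; apply: nostrict; exists (x, y).
apply/subsetP => -[x y] xyR.
rewrite inE (subsetP Rle _ xyR) inE.
by apply/and3P; split=> //; apply/imsetP; exists (x, y).
Qed.
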